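(* Consider a repeated single-slot hybrid auction over time steps $t=0,1,2,\dots$. At each step each advertiser $j$ bids $(m_{jt},c_{jt})$ (per-impression and per-click), the auctioneer computes an index $q_{jt}=f(\mathcal{Q}_{jt})$, where $\mathcal{Q}_{jt}$ is the auctioneer's current (Bayes-updated) prior on advertiser $j$'s click-through rate and $f$ is an arbitrary fixed function, the effective bid is $R_{jt}=\max(m_{jt},c_{jt}q_{jt})$, the highest effective bid wins, and with $R_{-j}$ the highest competing effective bid, the winner pays $R_{-j}$ per impression if $m_{jt}>c_{jt}q_{jt}$ and $R_{-j}/q_{jt}$ per click otherwise. Advertiser $j$ has per-click value $v_j$ and its own Bayes-updated prior $\mathcal{P}_{jt}$ on its click-through rate with mean $p_{jt}$; both priors are updated after every impression advertiser $j$ receives, based on whether a click occurred. An advertiser is semi-myopic with discount factor $\gamma_b\in[0,1)$ if: its bid at each step depends on its current state $\langle v_j,\mathcal{P}_{jt},\mathcal{Q}_{jt}\rangle$ and on $R_{-j}$, which is revealed at each step; if advertiser $j$ received the impression at the previous step, $R_{-j}$ stays the same, and otherwise it changes adversarially; and the advertiser maximizes its expected discounted (by $\gamma_b$) gain (value $v_j$ per click minus payments, expectations taken with respect to its own prior) over the contiguous sequence of steps in which it keeps receiving the impression. Define the bidding index as follows. For priors $\mathcal{P},\mathcal{Q}$ and a parameter $W$, consider the game with discount factor $\gamma_b$ in which at each step $t\ge 0$, with current priors $\mathcal{P}_t$ (mean $p_t$) and $\mathcal{Q}_t$ (index $q_t=f(\mathcal{Q}_t)$), the advertiser may stop or continue;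 if it continues it gains $vp_t-W\min(1,p_t/q_t)$ in expectation, an impression is shown and both priors are updated with the observed click outcome. Let $\mathcal{W}(v,\mathcal{P},\mathcal{Q})$ be the largest $W$ for which the optimal expected discounted value of this game, starting from $\mathcal{P}_0=\mathcal{P},\mathcal{Q}_0=\mathcal{Q}$, is positive, and let $\mathcal{B}(v,\mathcal{P},\mathcal{Q})=\mathcal{W}(v,\mathcal{P},\mathcal{Q})\min(1,p_0/q_0)$. The bidding index strategy for advertiser $j$ is to bid, at each step $t$, $(B_{jt},B_{jt}/p_{jt})$ where $B_{jt}=\mathcal{B}(v_j,\mathcal{P}_{jt},\mathcal{Q}_{jt})$. Then the bidding index strategy is (weakly) dominant in the class of semi-myopic strategies.
   Context: Expectations in the game defining the bidding index are with respect to the advertiser's own prior $\mathcal{P}_t$ (the advertiser trusts its own prior but not the auctioneer's). The click outcome in each step of that game is distributed according to the advertiser's prior, and both priors are Bayes-updated with it. *)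

From mathcomp Require Import all_boot all_order all_algebra.
From mathcomp Require Import all_classical all_reals all_analysis.
Import Order.TTheory GRing.Theory Num.Theory.
Import numFieldNormedType.Exports.

Set Implicit Arguments.
Unset Strict Implicit.
Unset Printing Implicit Defensive.

Local Open Scope classical_set_scope.
Local Open Scope ring_scope.

(* Priors.  A prior on a click-through rate is a probability measure on R   *)
(* concentrated on [0,1].  Bayes updating is represented through histories: *)
(* the posterior of an initial prior P after the sequence h of observed     *)
(* click outcomes (true = click) has density (proportional to) lik h        *)
(* with respect to P.                                                       *)

Section Defs.
Context {R : realType}.

Definition lik (h : seq bool) (x : R) : R :=
  \prod_(b <- h) (if b then x else 1 - x).

Definition mass (P : probability R R) (h : seq bool) : R :=
  fine (\int[P]_x (lik h x)%:E).

Definition posterior (P : probability R R) (h : seq bool) : set R -> \bar R :=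
  fun A => ((\int[P]_(x in A) (lik h x)%:E) * ((mass P h)^-1)%:E)%E.

Definition post_mean (P : probability R R) (h : seq bool) : R :=
  mass P (true :: h) / mass P h.

Definition cond_prob (P : probability R R) (h h' : seq bool) : R :=
  mass P (h ++ h') / mass P h.

Definition qidx (f : (set R -> \bar R) -> R) (Q : probability R R)
  (h : seq bool) : R := f (posterior Q h).

Definition alive (s : seq bool -> bool) (h' : seq bool) : bool :=
  all (fun k => s (take k h')) (iota 0 (size h').+1).

Definition disc_sum (gamma : R) (P : probability R R) (h : seq bool)
  (s : seq bool -> bool) (g : seq bool -> R) : R :=
  limn (series (fun n : nat => \sum_(h' : n.-tuple bool)
     (gamma ^+ n * cond_prob P h h' * (alive s h')%:R * g (h ++ h')))).

(* Stopping policy s : at relative history h' (all previous steps played),  *)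
(* s h' = true means "continue".  Continuing at absolute history k gives    *)
(* expected gain  v p_k - W min(1, p_k / q_k).                             *)
Definition game_gain (f : (set R -> \bar R) -> R) (v W : R)
  (P Q : probability R R) (k : seq bool) : R :=
  v * post_mean P k - W * Num.min 1 (post_mean P k / qidx f Q k).

Definition game_policy_value (f : (set R -> \bar R) -> R) (gamma v W : R)
  (P Q : probability R R) (h : seq bool) (s : seq bool -> bool) : R :=
  disc_sum gamma P h s (game_gain f v W P Q).

Definition game_value (f : (set R -> \bar R) -> R) (gamma v W : R)
  (P Q : probability R R) (h : seq bool) : R :=
  sup (range (game_policy_value f gamma v W P Q h)).

Definition Windex (f : (set R -> \bar R) -> R) (gamma v : R)
  (P Q : probability R R) (h : seq bool) : R :=
  sup [set W | 0 < game_value f gamma v W P Q h].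

Definition Bindex (f : (set R -> \bar R) -> R) (gamma v : R)
  (P Q : probability R R) (h : seq bool) : R :=
  Windex f gamma v P Q h * Num.min 1 (post_mean P h / qidx f Q h).

(* A bid is a pair (m, c) : per-impression and per-click.                  *)
Definition eff_bid (q : R) (b : R * R) : R := Num.max b.1 (b.2 * q).

Definition wins (Rm q : R) (b : R * R) : bool := Rm < eff_bid q b.

Definition win_gain (v Rm q p : R) (b : R * R) : R :=
  v * p - (if b.2 * q < b.1 then Rm else Rm / q * p).

(* A semi-myopic strategy: the bid is a function of the current state,     *)
(* i.e. the posteriors (P_t, Q_t) (the value v is fixed), and of the       *)
(* revealed competing bid R_{-j}.                                          *)
Definition strategy := (set R -> \bar R) -> (set R -> \bar R) -> R -> R * R.

(* The objective of a semi-myopic advertiser: expected (own prior)          *)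
(* discounted gain over the contiguous run of steps, starting at the        *)
(* posteriors after h, during which it keeps winning; R_{-j} = Rm stays    *)
(* fixed during the run.  The bid at absolute history k is given by bid k.  *)
Definition run_value (f : (set R -> \bar R) -> R) (gamma v Rm : R)
  (P Q : probability R R) (h : seq bool) (bid : seq bool -> R * R) : R :=
  disc_sum gamma P h
    (fun h' => wins Rm (qidx f Q (h ++ h')) (bid (h ++ h')))
    (fun k => win_gain v Rm (qidx f Q k) (post_mean P k) (bid k)).

Definition strat_bid (sigma : strategy) (Rm : R) (P Q : probability R R)
  (k : seq bool) : R * R := sigma (posterior P k) (posterior Q k) Rm.

Definition index_bid (f : (set R -> \bar R) -> R) (gamma v : R)
  (P Q : probability R R) (k : seq bool) : R * R :=
  (Bindex f gamma v P Q k, Bindex f gamma v P Q k / post_mean P k).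

End Defs.

(* With the competing bid [Rm] fixed, a semi-myopic run is a stopping
   problem.  Whatever is bid, a won impression yields in expectation at most
   [v p - Rm min(1, p/q)], the step gain of the index game with [W = Rm], and
   the run stops at a history-dependent time; so every run value is at most
   the optimal value [V_Rm] of that game.  The game value is nonincreasing and
   Lipschitz in [W], hence [Rm < W(v, P_t, Q_t)] iff [V_Rm > 0] at the current
   posteriors: the index bid wins exactly while [V_Rm > 0], and then pays
   exactly [Rm min(1, p/q)].  Its run therefore plays the threshold policy
   "continue while [V_Rm > 0]", which attains [V_Rm] because its optimality
   gap contracts by the factor [gamma] at every step. *)

From mathcomp Require Import all_boot all_order all_algebra.
From mathcomp Require Import all_classical all_reals all_analysis.
From mathcomp Require Import lra ring measurable_realfun.
Import Order.TTheory GRing.Theory Num.Theory.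
Import numFieldNormedType.Exports.

Local Open Scope classical_set_scope.
Local Open Scope ring_scope.

Section IndexBid.
Variable R : realType.

Lemma ltr_max_scale (Rm W c : R) : 0 <= Rm -> 0 < c -> c <= 1 ->
  (Rm < Num.max W (W * c)) = (Rm < W).
Proof.
move=> Rm0 c0 c1; have [W0|W0] := leP 0 W.
  by rewrite max_l // ler_piMr.
have Wc0 : W * c < 0 by rewrite pmulr_llt0.
have notlt x : x < 0 -> (Rm < x) = false by move=> x0; apply/negbTE; rewrite -leNgt; lra.
by rewrite lt_max !notlt.
Qed.

Lemma wins_index_bid (Rm W p q : R) : 0 <= Rm -> 0 < p -> 0 < q ->
  wins Rm q (W * Num.min 1 (p / q), W * Num.min 1 (p / q) / p) = (Rm < W).
Proof.
move=> Rm0 p0 q0; rewrite /wins /eff_bid /=.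
have [qp|pq] := ltP q p.
  rewrite min_l ?ler_pdivlMr ?mul1r ?(ltW qp) // mulr1 -mulrA.
  apply: ltr_max_scale => //; first by rewrite mulr_gt0 ?invr_gt0.
  by rewrite mulrC ler_pdivrMr // mul1r ltW.
rewrite min_r ?ler_pdivrMr ?mul1r //.
have -> : W * (p / q) / p * q = W by field; rewrite ?lt0r_neq0.
by rewrite maxC ltr_max_scale ?divr_gt0 ?ler_pdivrMr ?mul1r.
Qed.

Lemma win_gain_index_bid (v Rm W p q : R) : 0 <= Rm -> 0 < p -> 0 < q -> Rm < W ->
  win_gain v Rm q p (W * Num.min 1 (p / q), W * Num.min 1 (p / q) / p) =
  v * p - Rm * Num.min 1 (p / q).
Proof.
move=> Rm0 p0 q0 RmW; have W0 : 0 < W by apply: le_lt_trans RmW.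
rewrite /win_gain /=; congr (_ - _); have [qp|pq] := ltP q p.
  rewrite min_l ?ler_pdivlMr ?mul1r ?(ltW qp) // !mulr1 ifT //.
  by rewrite -mulrA gtr_pMr // mulrC ltr_pdivrMr // mul1r.
rewrite min_r ?ler_pdivrMr ?mul1r //.
have -> : W * (p / q) / p * q = W by field; rewrite ?lt0r_neq0.
rewrite ifF; first by rewrite mulrAC -mulrA.
by apply/negbTE; rewrite -leNgt ler_piMr ?(ltW W0) // ler_pdivrMr // mul1r.
Qed.

Lemma win_gain_le (v Rm q p : R) (b : R * R) : 0 <= Rm -> 0 <= p -> 0 < q ->
  win_gain v Rm q p b <= v * p - Rm * Num.min 1 (p / q).
Proof.
move=> Rm0 p0 q0; rewrite /win_gain lerD2l lerN2; case: ifP => _.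
  by rewrite ler_piMr // ge_min lexx.
by rewrite mulrAC -mulrA ler_wpM2l // ge_min lexx orbT.
Qed.

End IndexBid.

Section Likelihood.
Context {R : realType}.
Implicit Types (h : seq bool) (x : R).

Lemma lik_cons b h x : lik (b :: h) x = (if b then x else 1 - x) * lik h x.
Proof. by rewrite /lik big_cons. Qed.

Lemma lik_rcons b h x : lik (rcons h b) x = lik h x * (if b then x else 1 - x).
Proof. by rewrite /lik -cats1 big_cat /= big_seq1. Qed.

Lemma lik_cons_rcons b h : lik (b :: h) =1 lik (rcons h b) :> (R -> R).
Proof. by move=> x; rewrite lik_cons lik_rcons mulrC. Qed.

Lemma lik_itv01 h x : x \in `[0, 1] -> 0 <= lik h x <= 1.
Proof.
rewrite in_itv /= => /andP[x0 x1].
elim: h => [|b h /andP[l0 l1]]; first by rewrite /lik big_nil ler01 lexx.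
have /andP[c0 c1] : 0 <= (if b then x else 1 - x) <= 1 by case: b; apply/andP; split; lra.
by rewrite lik_cons mulr_ge0 //= mulr_ile1.
Qed.

Lemma measurable_lik h : measurable_fun setT (lik h : R -> R).
Proof.
apply: measurable_prod => -[] _ /=; first exact: measurable_id.
exact: measurable_funB.
Qed.

End Likelihood.

Section Mass.
Context {R : realType} {P : probability R R}.

Lemma mass_cons b h : mass P (b :: h) = mass P (rcons h b).
Proof. by rewrite /mass; under eq_integral do rewrite lik_cons_rcons. Qed.

Hypothesis P01 : P `[0%R, 1%R]%classic = 1%E.

(* Off [0, 1] the polynomial [lik h] may leave [0, 1]; as [P] is concentrated
   on [0, 1], masses are computed with the likelihood of the clamped rate. *)
Definition clamp01 (x : R) : R := Num.max 0 (Num.min 1 x).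

Lemma clamp01_itv x : clamp01 x \in `[0, 1].
Proof. by rewrite in_itv /= le_max lexx ge_max ler01 ge_min lexx. Qed.

Lemma clamp01_id x : x \in `[0, 1] -> clamp01 x = x.
Proof. by rewrite in_itv /= => /andP[x0 x1]; rewrite /clamp01 min_r // max_r. Qed.

Lemma measurable_clamp01 : measurable_fun setT clamp01.
Proof. exact/measurable_maxr/measurable_minr. Qed.

Let P_itv01C : P (~` `[0%R, 1%R]) = 0%E.
Proof. by rewrite probability_setC ?P01 ?subee //; exact: measurable_itv. Qed.

Let likc h x := lik h (clamp01 x).

Let likc_itv01 h x : 0 <= likc h x <= 1.
Proof. exact/lik_itv01/clamp01_itv. Qed.

Let measurable_likc h : measurable_fun setT (fun x => (likc h x)%:E).
Proof.
by apply/measurable_EFinP; exact: measurableT_comp (measurable_lik h) measurable_clamp01.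
Qed.

Let integral_likc h : (\int[P]_x (lik h x)%:E = \int[P]_x (likc h x)%:E)%E.
Proof.
apply: (ae_eq_integral (EFin \o likc h)) => //.
- by apply/measurable_EFinP; exact: measurable_lik.
- exact: measurable_likc.
exists (~` (`[0%R, 1%R]%classic : set R)); split.
- by apply: measurableC; exact: measurable_itv.
- exact: P_itv01C.
move=> x /= neq; apply: contrapT => x01; apply: neq => _.
by rewrite /likc clamp01_id //; apply: contrapT.
Qed.

Let mass_EFin h : (mass P h)%:E = (\int[P]_x (likc h x)%:E)%E.
Proof.
have ge0 : (0 <= \int[P]_x (likc h x)%:E)%E.
  by apply: integral_ge0 => x _; rewrite lee_fin; case/andP: (likc_itv01 h x).
have le1 : (\int[P]_x (likc h x)%:E <= 1)%E.
  apply: le_trans (probability_le1 P measurableT); rewrite -[X in (_ <= X)%E]mul1e.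
  rewrite -integral_cst //; apply: ge0_le_integral => //.
  - by move=> x _; rewrite lee_fin; case/andP: (likc_itv01 h x).
  - by move=> x _; rewrite lee_fin; case/andP: (likc_itv01 h x).
rewrite /mass integral_likc fineK // ge0_fin_numE //.
exact: le_lt_trans le1 (ltey _).
Qed.

Lemma mass_ge0 h : 0 <= mass P h.
Proof.
rewrite -lee_fin mass_EFin; apply: integral_ge0 => x _.
by rewrite lee_fin; case/andP: (likc_itv01 h x).
Qed.

Lemma mass_rcons h : mass P (rcons h true) + mass P (rcons h false) = mass P h.
Proof.
apply/eqP; rewrite -(@eqe R) EFinD !mass_EFin -ge0_integralD //.
- apply/eqP; apply: eq_integral => x _.
  by rewrite /likc !lik_rcons -EFinD -mulrDr subrKC mulr1.
- by move=> x _; rewrite lee_fin; case/andP: (likc_itv01 (rcons h true) x).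
- by move=> x _; rewrite lee_fin; case/andP: (likc_itv01 (rcons h false) x).
Qed.

End Mass.

Section TupleSums.
Context {V : nmodType} {T : finType}.

Lemma sum_tuple0 (F : seq T -> V) : \sum_(t : 0.-tuple T) F t = F [::].
Proof. by rewrite (big_pred1 [tuple]) // => t; rewrite /= tuple0; apply/esym/eqP. Qed.

Lemma sum_tupleS n (F : seq T -> V) :
  \sum_(t : n.+1.-tuple T) F t = \sum_(x : T) \sum_(t : n.-tuple T) F (x :: t).
Proof.
rewrite pair_big /= (reindex (fun p : T * n.-tuple T => [tuple of p.1 :: p.2])) //=.
exists (fun t : n.+1.-tuple T => (thead t, [tuple of behead t])).
  by move=> [x t] _; congr pair; apply: val_inj.
by move=> [[|x t] /= st] _; apply: val_inj.
Qed.

End TupleSums.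

Section Policies.
Implicit Types (s : seq bool -> bool) (t : seq bool).

Definition tail_policy s b : seq bool -> bool := fun t => s (b :: t).

Lemma alive_cons s b t : alive s (b :: t) = s [::] && alive (tail_policy s b) t.
Proof.
have iotaS n : iota 0 n.+1 = 0%N :: map succn (iota 0 n) by rewrite /= -(iotaDl 1).
by rewrite /alive iotaS /= all_map.
Qed.

Lemma alive_head s t : alive s t -> s [::].
Proof. by case: t => [|b t]; rewrite ?alive_cons /alive /= => /andP[]. Qed.

Lemma alive_last s t : alive s t -> s t.
Proof. by move=> /allP /(_ (size t)); rewrite mem_iota ltnSn take_size; apply. Qed.

End Policies.

Section DiscountedSum.
Context {R : realType} (P : probability R R).
Local Notation m := (mass P).
Hypothesis m_ge0 : forall h, 0 <= m h.
Hypothesis m_rcons : forall h, m (rcons h true) + m (rcons h false) = m h.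
Variable gamma : R.
Hypotheses (gamma_ge0 : 0 <= gamma) (gamma_lt1 : gamma < 1).
Implicit Types (h k t : seq bool) (s : seq bool -> bool) (g : seq bool -> R) (W Rm : R).

Lemma mass_rcons_le h b : m (rcons h b) <= m h.
Proof. by rewrite -(m_rcons h); case: b; rewrite ?lerDl ?lerDr. Qed.

Lemma mass_cat_le h t : m (h ++ t) <= m h.
Proof.
elim/last_ind: t => [|t b IHt]; first by rewrite cats0.
by rewrite -rcons_cat (le_trans (mass_rcons_le _ _)).
Qed.

Lemma mass_cat_eq0 h t : m h = 0 -> m (h ++ t) = 0.
Proof. by move=> mh0; apply/eqP; rewrite eq_le m_ge0 -mh0 mass_cat_le. Qed.

Lemma sum_mass_cat n h : \sum_(t : n.-tuple bool) m (h ++ t) = m h.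
Proof.
elim: n h => [|n IHn] h; first by rewrite (sum_tuple0 (fun t => m (h ++ t))) cats0.
rewrite (sum_tupleS n (fun t => m (h ++ t))) big_bool /=.
under eq_bigr do rewrite -cat_rcons.
under [X in _ + X]eq_bigr do rewrite -cat_rcons.
by rewrite !IHn.
Qed.

Lemma cond_prob_ge0 h t : 0 <= cond_prob P h t.
Proof. exact: divr_ge0. Qed.

Lemma sum_cond_prob_le1 n h : \sum_(t : n.-tuple bool) cond_prob P h t <= 1.
Proof.
rewrite /cond_prob -mulr_suml sum_mass_cat.
by have [->|mh0] := eqVneq (m h) 0; rewrite ?mul0r ?divff.
Qed.

Lemma cond_prob1_le1 h : cond_prob P h [:: true] + cond_prob P h [:: false] <= 1.
Proof.
have := sum_cond_prob_le1 1 h.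
by rewrite (sum_tupleS 0 (cond_prob P h)) big_bool /= !(sum_tuple0 (cond_prob P h \o cons _)).
Qed.

Lemma cond_prob_nil h : m h != 0 -> cond_prob P h [::] = 1.
Proof. by move=> mh0; rewrite /cond_prob cats0 divff. Qed.

Lemma cond_prob_cons h b t :
  cond_prob P h (b :: t) = cond_prob P h [:: b] * cond_prob P (rcons h b) t.
Proof.
rewrite /cond_prob cats1 -cat_rcons.
have [mhb0|mhb0] := eqVneq (m (rcons h b)) 0; first by rewrite mass_cat_eq0 // mhb0 !mul0r.
by rewrite [RHS]mulrC -mulrA mulKf.
Qed.

Definition disc_term h s g n := \sum_(t : n.-tuple bool)
  (gamma ^+ n * cond_prob P h t * (alive s t)%:R * g (h ++ t)).

Lemma disc_sumE h s g : disc_sum gamma P h s g = limn (series (disc_term h s g)).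
Proof. by []. Qed.

Lemma disc_term0 h s g : disc_term h s g 0 = cond_prob P h [::] * (s [::])%:R * g h.
Proof.
rewrite /disc_term (sum_tuple0 (fun t => _ * cond_prob P h t * (alive s t)%:R * g (h ++ t))).
by rewrite expr0 mul1r /alive /= andbT cats0.
Qed.

Lemma disc_termS h s g n : disc_term h s g n.+1 = (s [::])%:R * (gamma *
  (cond_prob P h [:: true] * disc_term (rcons h true) (tail_policy s true) g n +
   cond_prob P h [:: false] * disc_term (rcons h false) (tail_policy s false) g n)).
Proof.
have head_step b : \sum_(t : n.-tuple bool)
    gamma ^+ n.+1 * cond_prob P h (b :: t) * (alive s (b :: t))%:R * g (h ++ b :: t) =
    (s [::])%:R * gamma * cond_prob P h [:: b] * disc_term (rcons h b) (tail_policy s b) g n.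
  rewrite /disc_term mulr_sumr; apply: eq_bigr => t _.
  by rewrite cond_prob_cons alive_cons -cat_rcons exprS -mulnb natrM; ring.
rewrite {1}/disc_term.
rewrite (sum_tupleS n (fun t => _ * cond_prob P h t * (alive s t)%:R * g (h ++ t))).
by rewrite big_bool /= !head_step; ring.
Qed.

Section Bounded.
Context {g : seq bool -> R} {C : R} (g_le : forall k, `|g k| <= C).

Let C_ge0 : 0 <= C. Proof. exact: le_trans (g_le [::]). Qed.

Lemma norm_disc_term_le h s n : `|disc_term h s g n| <= C * gamma ^+ n.
Proof.
apply: le_trans (ler_norm_sum _ _ _) _.
apply: (@le_trans _ _ (\sum_(t : n.-tuple bool) C * gamma ^+ n * cond_prob P h t)).
  apply: ler_sum => t _.
  have w_ge0 : 0 <= gamma ^+ n * cond_prob P h t.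
    exact: mulr_ge0 (exprn_ge0 _ gamma_ge0) (cond_prob_ge0 _ _).
  have [a_ge0 a_le1] : 0 <= ((alive s t)%:R : R) /\ ((alive s t)%:R : R) <= 1.
    by case: (alive s t); rewrite ?lexx ?ler01.
  rewrite (_ : C * _ * _ = gamma ^+ n * cond_prob P h t * 1 * C); last by ring.
  rewrite normrM ger0_norm; last exact: mulr_ge0 w_ge0 a_ge0.
  exact: ler_pM (mulr_ge0 w_ge0 a_ge0) (normr_ge0 _) (ler_wpM2l w_ge0 a_le1) (g_le _).
by rewrite -mulr_sumr ler_piMr ?mulr_ge0 ?exprn_ge0 ?sum_cond_prob_le1.
Qed.

Lemma is_cvg_norm_disc_series h s : cvgn (series (fun n => `|disc_term h s g n|)).
Proof.
apply: (series_le_cvg (fun n => normr_ge0 _) _ (fun n => norm_disc_term_le h s n)).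
  by move=> n; rewrite mulr_ge0 ?exprn_ge0.
by apply: is_cvg_geometric_series; rewrite ger0_norm.
Qed.

Lemma is_cvg_disc_series h s : cvgn (series (disc_term h s g)).
Proof. exact/normed_cvg/is_cvg_norm_disc_series. Qed.

Lemma norm_disc_sum_le h s : `|disc_sum gamma P h s g| <= C / (1 - gamma).
Proof.
rewrite disc_sumE; apply: le_trans (lim_series_norm (is_cvg_norm_disc_series h s)) _.
have geo : series (geometric C gamma) @ \oo --> C / (1 - gamma).
  by apply: cvg_geometric_series; rewrite ger0_norm.
rewrite -(cvg_lim _ geo) //; apply: lim_series_le (is_cvg_norm_disc_series h s) _ _.
  exact: cvgP geo.
exact: norm_disc_term_le.
Qed.

Lemma disc_sum_rec h s : disc_sum gamma P h s g = (s [::])%:R *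
  (cond_prob P h [::] * g h + gamma *
   (cond_prob P h [:: true] * disc_sum gamma P (rcons h true) (tail_policy s true) g +
    cond_prob P h [:: false] * disc_sum gamma P (rcons h false) (tail_policy s false) g)).
Proof.
rewrite !disc_sumE.
set ut := disc_term (rcons h true) (tail_policy s true) g.
set uf := disc_term (rcons h false) (tail_policy s false) g.
set pt := cond_prob P h [:: true]; set pf := cond_prob P h [:: false].
have ct : cvgn (series ut) by exact: is_cvg_disc_series.
have cf : cvgn (series uf) by exact: is_cvg_disc_series.
have shiftE : (fun n => series (disc_term h s g) n.+1) = (fun n => disc_term h s g 0 +
    (s [::])%:R * gamma * (pt * series ut n + pf * series uf n)).
  apply/funext => n; rewrite /series /= big_nat_recl //; congr (_ + _).
  under eq_bigr do rewrite disc_termS.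
  by rewrite -!mulr_sumr big_split /= -!mulr_sumr mulrA.
have lim_shift : series (disc_term h s g) @ \oo --> disc_term h s g 0 +
    (s [::])%:R * gamma * (pt * limn (series ut) + pf * limn (series uf)).
  rewrite -cvg_shiftS /= shiftE; apply: cvgD; first exact: cvg_cst.
  by apply: cvgMl_tmp; apply: cvgD; apply: cvgMl_tmp.
by rewrite (cvg_lim _ lim_shift) // disc_term0; ring.
Qed.

End Bounded.

Lemma ler_disc_sum h s g1 g2 C : cvgn (series (disc_term h s g1)) ->
  (forall k, `|g2 k| <= C) -> (forall k, g1 k <= g2 k) ->
  disc_sum gamma P h s g1 <= disc_sum gamma P h s g2.
Proof.
move=> cvg1 g2_le g12; rewrite !disc_sumE.
apply: lim_series_le cvg1 (is_cvg_disc_series g2_le h s) _ => n.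
apply: ler_sum => t _; apply: ler_wpM2l (g12 _).
exact: mulr_ge0 (mulr_ge0 (exprn_ge0 _ gamma_ge0) (cond_prob_ge0 _ _)) (ler0n _ _).
Qed.

Lemma disc_sumD {g1 g2 : seq bool -> R} {C1 C2 : R} :
  (forall k, `|g1 k| <= C1) -> (forall k, `|g2 k| <= C2) -> forall h s,
  disc_sum gamma P h s (fun k => g1 k + g2 k) =
  disc_sum gamma P h s g1 + disc_sum gamma P h s g2.
Proof.
move=> g1_le g2_le h s; rewrite !disc_sumE.
have -> : disc_term h s (fun k => g1 k + g2 k) = disc_term h s g1 + disc_term h s g2.
  apply/funext => n; rewrite -[RHS]/(disc_term h s g1 n + disc_term h s g2 n).
  rewrite /disc_term -big_split /=.
  by apply: eq_bigr => t _; rewrite mulrDr.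
by rewrite seriesD limD //;
  [exact: is_cvg_disc_series g1_le h s | exact: is_cvg_disc_series g2_le h s].
Qed.

Lemma eq_disc_sum h s1 s2 g1 g2 : s1 =1 s2 ->
  (forall t, s2 t -> g1 (h ++ t) = g2 (h ++ t)) ->
  disc_sum gamma P h s1 g1 = disc_sum gamma P h s2 g2.
Proof.
move=> /funext-> g12; rewrite !disc_sumE; congr (limn (series _)).
apply/funext => n; apply: eq_bigr => t _.
by case alive_t: (alive s2 t); rewrite ?mulr0 ?mul0r // g12 // alive_last.
Qed.

Lemma disc_sum_eq0 h s g : (forall t, alive s t -> g (h ++ t) = 0) ->
  disc_sum gamma P h s g = 0.
Proof.
move=> g0; have term0 : disc_term h s g = fun=> 0.
  apply/funext => n; apply: big1 => t _.
  by case alive_t: (alive s t); rewrite ?mulr0 ?mul0r // g0 ?mulr0.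
rewrite disc_sumE term0 (_ : series _ = fun=> 0) ?lim_cst //.
by apply/funext => n; apply: big1.
Qed.

Lemma disc_sum_stop h s g : ~~ s [::] -> disc_sum gamma P h s g = 0.
Proof. by move=> stop; apply: disc_sum_eq0 => t /alive_head; rewrite (negbTE stop). Qed.

Section Game.
Variables (Q : probability R R) (f : (set R -> \bar R) -> R) (v : R).
Hypothesis f_gt0 : forall Qs, 0 < f Qs.

Local Notation p := (post_mean P).
Local Notation q := (qidx f Q).
Local Notation mu k := (Num.min 1 (p k / q k)).
Local Notation gain W := (game_gain f v W P Q).
Local Notation J W := (game_policy_value f gamma v W P Q).
Local Notation V W := (game_value f gamma v W P Q).

Lemma post_mean_itv01 k : 0 <= p k <= 1.
Proof.
rewrite /post_mean divr_ge0 //=; have [->|mk0] := eqVneq (m k) 0.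
  by rewrite invr0 mulr0.
by rewrite ler_pdivrMr ?lt0r ?mk0 ?m_ge0 // mul1r mass_cons mass_rcons_le.
Qed.

Lemma post_mean_gt0_mass_neq0 k : 0 < p k -> m k != 0.
Proof. by apply: contraTneq => mk0; rewrite /post_mean mk0 invr0 mulr0 ltxx. Qed.

Lemma post_mean_eq0_cat k t : p k = 0 -> p (k ++ t) = 0.
Proof.
rewrite /post_mean; have [mk0 _|mk0] := eqVneq (m k) 0.
  by rewrite mass_cat_eq0 // invr0 mulr0.
move/eqP; rewrite mulf_eq0 invr_eq0 (negbTE mk0) orbF => /eqP mtk0.
by rewrite -cat_cons mass_cat_eq0 // mul0r.
Qed.

Lemma mu_itv01 k : 0 <= mu k <= 1.
Proof.
case/andP: (post_mean_itv01 k) => pk0 _.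
by rewrite ge_min lexx le_min ler01 divr_ge0 // (ltW (f_gt0 _)).
Qed.

Lemma norm_game_gain_le W k : `|gain W k| <= `|v| + `|W|.
Proof.
case/andP: (post_mean_itv01 k) => pk0 pk1; case/andP: (mu_itv01 k) => mu0 mu1.
apply: le_trans (ler_normB _ _) _.
by rewrite lerD // normrM ?(ger0_norm pk0) ?(ger0_norm mu0) ler_piMr.
Qed.

Lemma ler_game_gain W1 W2 k : W1 <= W2 -> gain W2 k <= gain W1 k.
Proof. by move=> W12; rewrite lerD2l lerN2 ler_wpM2r //; case/andP: (mu_itv01 k). Qed.

Lemma game_gain_post_mean0 W k : p k = 0 -> gain W k = 0.
Proof. by move=> pk0; rewrite /game_gain pk0 mul0r min_r // !mulr0 subrr. Qed.

Let K W := (`|v| + `|W|) / (1 - gamma).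

Let K_ge0 W : 0 <= K W.
Proof. by apply: divr_ge0; [exact: addr_ge0 | rewrite subr_ge0 ltW]. Qed.

Lemma norm_policy_value_le W h s : `|J W h s| <= K W.
Proof. exact/norm_disc_sum_le/norm_game_gain_le. Qed.

Lemma policy_value_le_value W h s : J W h s <= V W h.
Proof.
apply: ub_le_sup; last by exists s.
by exists (K W) => _ [s' _ <-]; apply: le_trans (ler_norm _) (norm_policy_value_le _ _ _).
Qed.

Lemma game_value_le_ub W h x : (forall s, J W h s <= x) -> V W h <= x.
Proof. by move=> Jx; apply: ge_sup => [|_ [s _ <-]]; [exists (J W h xpred0), xpred0|]. Qed.

Lemma policy_value_stop W h s : ~~ s [::] -> J W h s = 0.
Proof. exact: disc_sum_stop. Qed.

Lemma game_value_ge0 W h : 0 <= V W h.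
Proof. by rewrite -(@policy_value_stop W h xpred0) // policy_value_le_value. Qed.

Lemma game_value_le W h : V W h <= K W.
Proof.
by apply: game_value_le_ub => s; apply: le_trans (ler_norm _) (norm_policy_value_le _ _ _).
Qed.

Lemma policy_value_rec W h s : J W h s = (s [::])%:R *
  (cond_prob P h [::] * gain W h + gamma *
   (cond_prob P h [:: true] * J W (rcons h true) (tail_policy s true) +
    cond_prob P h [:: false] * J W (rcons h false) (tail_policy s false))).
Proof. exact/disc_sum_rec/norm_game_gain_le. Qed.

Lemma game_value_bellman {W h} : 0 < V W h -> V W h <=
  cond_prob P h [::] * gain W h + gamma *
  (cond_prob P h [:: true] * V W (rcons h true) +
   cond_prob P h [:: false] * V W (rcons h false)).
Proof.
move=> Vh_gt0; set rhs := (X in _ <= X).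
suff : V W h <= Num.max 0 rhs.
  by rewrite le_max => /orP[/(lt_le_trans Vh_gt0)|//]; rewrite ltxx.
apply: game_value_le_ub => s; rewrite policy_value_rec le_max.
case: (s [::]); last by rewrite mul0r lexx.
rewrite mul1r; apply/orP; right; rewrite /rhs lerD2l ler_wpM2l // lerD //.
  by rewrite ler_wpM2l ?cond_prob_ge0 ?policy_value_le_value.
by rewrite ler_wpM2l ?cond_prob_ge0 ?policy_value_le_value.
Qed.

Definition threshold_policy W h : seq bool -> bool := fun t => 0 < V W (h ++ t).

Lemma tail_threshold_policy W h b :
  tail_policy (threshold_policy W h) b = threshold_policy W (rcons h b).
Proof. by apply/funext => t; rewrite /tail_policy /threshold_policy cat_rcons. Qed.

Section OptimalityGap.
Variable W : R.

Let gap h := V W h - J W h (threshold_policy W h).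

Let gap_ge0 h : 0 <= gap h.
Proof. by rewrite subr_ge0 policy_value_le_value. Qed.

Let gap_le h : gap h <= K W + K W.
Proof.
have := norm_policy_value_le W h (threshold_policy W h); rewrite ler_norml.
by have := game_value_le W h; rewrite /gap; lra.
Qed.

(* Where the threshold policy continues, [V] satisfies the Bellman inequality
   and [J] the Bellman equation; where it stops, [V] vanishes. *)
Let gap_rec h : gap h <=
  gamma * (cond_prob P h [:: true] * gap (rcons h true) +
           cond_prob P h [:: false] * gap (rcons h false)).
Proof.
have [Vh_gt0|Vh_le0] := ltP 0 (V W h); last first.
  have Vh0 : V W h = 0 by apply/eqP; rewrite eq_le Vh_le0 game_value_ge0.
  have stop : ~~ threshold_policy W h [::] by rewrite /threshold_policy cats0 Vh0 ltxx.
  have cgap_ge0 b : 0 <= cond_prob P h [:: b] * gap (rcons h b).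
    exact: mulr_ge0 (cond_prob_ge0 _ _) (gap_ge0 _).
  rewrite {1}/gap policy_value_stop // Vh0 subr0.
  exact: mulr_ge0 gamma_ge0 (addr_ge0 (cgap_ge0 true) (cgap_ge0 false)).
have go : threshold_policy W h [::] by rewrite /threshold_policy cats0.
rewrite /gap policy_value_rec go mul1r !tail_threshold_policy.
move: (game_value_bellman Vh_gt0).
move: (V W h) (V W (rcons h true)) (V W (rcons h false)).
move: (J W (rcons h true) _) (J W (rcons h false) _) (gain W h).
move=> Jt Jf g V0 Vt Vf; lra.
Qed.

Let gap_le_geometric n h : gap h <= (K W + K W) * gamma ^+ n.
Proof.
elim: n h => [|n IHn] h; first by rewrite expr0 mulr1.
apply: le_trans (gap_rec h) _; rewrite exprS mulrCA ler_wpM2l //.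
apply: le_trans (_ : _ <= (cond_prob P h [:: true] + cond_prob P h [:: false]) *
  ((K W + K W) * gamma ^+ n)) _.
  by rewrite mulrDl lerD // ler_wpM2l ?cond_prob_ge0.
by rewrite ler_piMl ?cond_prob1_le1 // mulr_ge0 ?exprn_ge0 ?addr_ge0.
Qed.

Lemma threshold_policy_optimal h : J W h (threshold_policy W h) = V W h.
Proof.
apply/eqP; rewrite eq_sym -subr_eq0 eq_le -/(gap h) gap_ge0 andbT.
have geo : (K W + K W) * gamma ^+ n @[n --> \oo] --> (K W + K W) * 0.
  by apply: cvgMl_tmp; apply: cvg_expr; rewrite ger0_norm.
rewrite mulr0 in geo; apply: (cvgr_to_ge geo); near=> n; exact: gap_le_geometric.
Unshelve. all: by end_near.
Qed.

End OptimalityGap.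

Lemma ler_policy_value h s {W1 W2} : W1 <= W2 -> J W2 h s <= J W1 h s.
Proof.
move=> W12; apply: ler_disc_sum (norm_game_gain_le W1) _ => [|k].
  exact/is_cvg_disc_series/norm_game_gain_le.
exact: ler_game_gain.
Qed.

Lemma ler_game_value h {W1 W2} : W1 <= W2 -> V W2 h <= V W1 h.
Proof.
move=> W12; apply: game_value_le_ub => s.
exact: le_trans (ler_policy_value h s W12) (policy_value_le_value _ _ _).
Qed.

Lemma game_value_lipschitz h {W1 W2} : W1 <= W2 ->
  V W1 h <= V W2 h + (W2 - W1) / (1 - gamma).
Proof.
move=> W12; apply: game_value_le_ub => s.
have dW_le k : `|(W1 - W2) * mu k| <= W2 - W1.
  case/andP: (mu_itv01 k) => mu0 mu1.
  by rewrite normrM distrC (ger0_norm mu0) ger0_norm ?subr_ge0 // ler_piMr ?subr_ge0.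
have J2E : J W2 h s = J W1 h s + disc_sum gamma P h s (fun k => (W1 - W2) * mu k).
  rewrite -(disc_sumD (norm_game_gain_le W1) dW_le).
  by congr disc_sum; apply/funext => k; rewrite /game_gain; ring.
have := norm_disc_sum_le dW_le h s; rewrite ler_norml => /andP[dJ_ge _].
have := policy_value_le_value W2 h s; rewrite J2E; lra.
Qed.

Lemma game_value_post_mean0 W k : p k = 0 -> V W k <= 0.
Proof.
move=> pk0; apply: game_value_le_ub => s; rewrite /game_policy_value disc_sum_eq0 //.
by move=> t _; rewrite game_gain_post_mean0 // post_mean_eq0_cat.
Qed.

Lemma game_value_gt0_post_mean {W k} : 0 < V W k -> 0 < p k.
Proof.
move=> Vk_gt0; case/andP: (post_mean_itv01 k) => pk_ge0 _; rewrite lt0r pk_ge0 andbT.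
by apply: contraTneq Vk_gt0 => /(game_value_post_mean0 W); rewrite -leNgt.
Qed.

Lemma game_value_le0_large {k} : 0 < p k -> exists Wb, forall W, Wb <= W -> V W k <= 0.
Proof.
move=> pk_gt0; have mu_gt0 : 0 < mu k by rewrite lt_min ltr01 divr_gt0 ?f_gt0.
exists ((`|v| + K 0) / mu k) => W WbW.
have W_ge0 : 0 <= W.
  by apply: le_trans WbW; apply: divr_ge0; [exact: addr_ge0 | exact: ltW].
have gain_le : gain W k <= - K 0.
  have vp_le : v * p k <= `|v|.
    case/andP: (post_mean_itv01 k) => pk0 pk1.
    by apply: le_trans (ler_norm _) _; rewrite normrM (ger0_norm pk0) ler_piMr.
  have Wmu_ge : `|v| + K 0 <= W * mu k by rewrite -ler_pdivrMr.
  by apply: le_trans (lerB vp_le Wmu_ge) _; rewrite opprD addrA subrr add0r.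
have cont_le b s : J W (rcons k b) s <= K 0.
  apply: le_trans (ler_policy_value _ _ W_ge0) _.
  exact: le_trans (ler_norm _) (norm_policy_value_le _ _ _).
apply: game_value_le_ub => s; rewrite policy_value_rec.
case: (s [::]); last by rewrite mul0r.
rewrite mul1r cond_prob_nil ?post_mean_gt0_mass_neq0 // mul1r -[0](addNr (K 0)) lerD //.
apply: le_trans (_ : _ <= gamma * ((cond_prob P k [:: true] +
  cond_prob P k [:: false]) * K 0)) _.
  by rewrite ler_wpM2l // mulrDl lerD // ler_wpM2l ?cond_prob_ge0.
rewrite mulrA ler_piMl // mulr_ile1 ?addr_ge0 ?cond_prob_ge0 ?cond_prob1_le1 //.
exact: ltW.
Qed.

Lemma ltr_Windex Rm k : 0 <= Rm -> (Rm < Windex f gamma v P Q k) = (0 < V Rm k).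
Proof.
move=> Rm_ge0; set S := [set W | 0 < V W k]; rewrite -[Windex _ _ _ _ _ _]/(sup S).
apply/idP/idP => [Rm_lt|Vk_gt0].
  have S_ne0 : S !=set0.
    by apply/set0P; apply: contraTneq Rm_lt => ->; rewrite sup0 -leNgt.
  have [W' SW' RmW'] := sup_gt S_ne0 Rm_lt.
  exact: lt_le_trans SW' (ler_game_value k (ltW RmW')).
have [Wb Wb_le0] := game_value_le0_large (game_value_gt0_post_mean Vk_gt0).
have S_ub : has_ubound S.
  by exists Wb => W; rewrite /S /= leNgt; apply: contraTN => /ltW/Wb_le0; rewrite leNgt.
set W' := Rm + (1 - gamma) * V Rm k / 2.
have gamma1_gt0 : 0 < 1 - gamma by rewrite subr_gt0.
have RmW' : Rm < W' by rewrite ltrDl divr_gt0 ?mulr_gt0.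
have SW' : S W'.
  have := game_value_lipschitz k (ltW RmW').
  have -> : (W' - Rm) / (1 - gamma) = V Rm k / 2 by rewrite /W'; field; rewrite lt0r_neq0.
  rewrite /S /=; lra.
exact: lt_le_trans RmW' (ub_le_sup S_ub SW').
Qed.

Lemma wins_index_bid_value Rm k : 0 <= Rm ->
  wins Rm (q k) (index_bid f gamma v P Q k) = (0 < V Rm k).
Proof.
move=> Rm_ge0; have [pk0|pk_neq0] := eqVneq (p k) 0.
  rewrite ltNge game_value_post_mean0 // /wins /index_bid /Bindex /eff_bid /= pk0.
  by rewrite mul0r min_r // !mulr0 !mul0r maxxx ltNge Rm_ge0.
have pk_gt0 : 0 < p k by rewrite lt0r pk_neq0; case/andP: (post_mean_itv01 k).
by rewrite /index_bid /Bindex wins_index_bid ?f_gt0 // ltr_Windex.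
Qed.

Lemma win_gain_index_bid_value Rm k : 0 <= Rm -> 0 < V Rm k ->
  win_gain v Rm (q k) (p k) (index_bid f gamma v P Q k) = gain Rm k.
Proof.
move=> Rm_ge0 Vk_gt0; have pk_gt0 := game_value_gt0_post_mean Vk_gt0.
by rewrite /index_bid /Bindex win_gain_index_bid ?f_gt0 ?ltr_Windex.
Qed.

Lemma run_value_index_bid Rm h : 0 <= Rm ->
  run_value f gamma v Rm P Q h (index_bid f gamma v P Q) = V Rm h.
Proof.
move=> Rm_ge0; rewrite -(threshold_policy_optimal Rm h).
apply: eq_disc_sum => [t|t Vt_gt0]; first exact: wins_index_bid_value.
exact: win_gain_index_bid_value.
Qed.

Lemma run_value_le_game_value Rm h bid : 0 <= Rm ->
  run_value f gamma v Rm P Q h bid <= V Rm h.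
Proof.
move=> Rm_ge0; rewrite /run_value.
set s := (fun t => _); set g := (fun k => _).
have [cvg_g|dvg_g] := pselect (cvgn (series (disc_term h s g))); last first.
  (* a divergent series has limit [0] by convention *)
  by rewrite disc_sumE (dvgP dvg_g) game_value_ge0.
apply: le_trans (policy_value_le_value Rm h s).
apply: ler_disc_sum cvg_g (norm_game_gain_le Rm) _ => k.
case/andP: (post_mean_itv01 k) => pk_ge0 _.
by rewrite /g /game_gain win_gain_le ?f_gt0.
Qed.

End Game.

End DiscountedSum.

Theorem theorem4 (R : realType) (f : (set R -> \bar R) -> R)
  (f_pos : forall Qs : set R -> \bar R, 0 < f Qs)
  (gamma : R) (gamma_ge0 : 0 <= gamma) (gamma_lt1 : gamma < 1)
  (v : R) (P Q : probability R R)
  (P01 : P `[0%R, 1%R]%classic = 1%E) (Q01 : Q `[0%R, 1%R]%classic = 1%E)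
  (sigma : strategy) (Rm : R) (Rm_ge0 : 0 <= Rm) :
  run_value f gamma v Rm P Q [::] (strat_bid sigma Rm P Q)
    <= run_value f gamma v Rm P Q [::] (index_bid f gamma v P Q).
Proof.
have m_ge0 := mass_ge0 P01.
have m_rcons := mass_rcons P01.
rewrite run_value_index_bid //.
exact: run_value_le_game_value.
Qed.
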